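(* Let $n\ge 2$, let $a_1,\dots,a_n$ be positive integers, and let $s=[2a_1,-2a_2,2a_3,\dots,(-1)^{n-1}2a_n]$ and $s'=[2a_1,-2a_2,\dots,(-1)^{n-2}2a_{n-1}]$. Then $\Delta_{K(s)}(t)$ and $\Delta_{K(s')}(t)$ have only real zeros, the product $\Delta_{K(s)}(t)\Delta_{K(s')}(t)$ has no repeated zeros, and the zeros of $\Delta_{K(s)}(t)$ and $\Delta_{K(s')}(t)$ are interlaced.
   Context: For a finite sequence $r=[2a_1,2a_2,\dots,2a_n]$ of nonzero even integers, $K(r)$ denotes the 2-bridge knot or link whose associated rational number has the even continued fraction expansion $1/(2a_1-1/(2a_2-\cdots-1/(2a_n)))$. Let $M(r)$ be the $n\times n$ integer matrix whose $(k,k)$-entry is $a_k$, whose $(k,k+1)$-entry is $1$ ($1\le k\le n-1$), and whose other entries are $0$; $\Delta_{K(r)}(t)=\det(tM(r)-M(r)^T)$ is the (reduced) Alexander polynomial of $K(r)$ (up to sign). Interlacing: two real-rooted polynomials with zeros $\alpha_1\le\dots\le\alpha_n$ and $\beta_1\le\dots\le\beta_m$ (with multiplicity) are interlaced if $|m-n|\le1$ and the zeros alternate: if $n=m$, either $\alpha_1\le\beta_1\le\alpha_2\le\dots\le\alpha_n\le\beta_n$ or $\beta_1\le\alpha_1\le\dots\le\beta_n\le\alpha_n$; if $n=m+1$, $\alpha_1\le\beta_1\le\alpha_2\le\dots\le\beta_m\le\alpha_{m+1}$; if $m=n+1$, $\beta_1\le\alpha_1\le\beta_2\le\dots\le\alpha_n\le\beta_{n+1}$.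 *)

From HB Require Import structures.
From mathcomp Require Import all_boot all_order all_algebra all_field.
Set Implicit Arguments. Unset Strict Implicit. Unset Printing Implicit Defensive.
Import Order.TTheory GRing.Theory Num.Theory.
Local Open Scope ring_scope.

(* For r = [2a_1,...,2a_n] (a seq of even ints), M(r) is the n x n integer
   matrix with (k,k)-entry a_k = r_k / 2, (k,k+1)-entry 1, other entries 0. *)
Definition Mmat (r : seq int) : 'M[int]_(size r) :=
  \matrix_(i, j) (if i == j then (r`_i %/ 2)%Z
                  else if (j == i.+1 :> nat) then 1 else 0).

Definition alexander (r : seq int) : {poly int} :=
  \det ('X *: map_mx polyC (Mmat r) - (map_mx polyC (Mmat r))^T).

Definition alexC (r : seq int) : {poly algC} :=
  map_poly (fun z : int => z%:~R) (alexander r).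

Definition only_real_zeros (p : {poly algC}) : Prop :=
  forall z : algC, root p z -> z \is Num.real.

Definition no_repeated_zeros (p : {poly algC}) : Prop :=
  forall z : algC, root p z -> mup z p = 1%N.

Definition sorted_zeros (p : {poly algC}) (rs : seq algC) : Prop :=
  all (fun x => x \is Num.real) rs /\ sorted <=%R rs /\
  p = lead_coef p *: \prod_(x <- rs) ('X - x%:P).

Definition interlaced_seq (al be : seq algC) : Prop :=
  let n := size al in let m := size be in
  (n = m /\
     ((forall i, (i < n)%N -> al`_i <= be`_i) /\
      (forall i, (i.+1 < n)%N -> be`_i <= al`_i.+1)
    \/ (forall i, (i < n)%N -> be`_i <= al`_i) /\
      (forall i, (i.+1 < n)%N -> al`_i <= be`_i.+1)))
  \/ (n = m.+1 /\ forall i, (i < m)%N -> al`_i <= be`_i /\ be`_i <= al`_i.+1)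
  \/ (m = n.+1 /\ forall i, (i < n)%N -> be`_i <= al`_i /\ al`_i <= be`_i.+1).

Definition interlaced (p q : {poly algC}) : Prop :=
  exists al be, sorted_zeros p al /\ sorted_zeros q be /\ interlaced_seq al be.

Definition alt_seq (a : seq int) (k : nat) : seq int :=
  mkseq (fun i => (-1) ^+ i * 2 * a`_i) k.

From HB Require Import structures.
From mathcomp Require Import all_boot all_order all_algebra all_field.
From mathcomp Require Import zify polyrcf ring.
Import Order.TTheory GRing.Theory Num.Theory.
Local Open Scope ring_scope.
Set Implicit Arguments. Unset Strict Implicit. Unset Printing Implicit Defensive.

(* The matrix t M(r) - M(r)^T is tridiagonal, so its determinant is a
   continuant: D_{k+1} = (t - 1) (r_k / 2) D_k + t D_{k-1} (det_tridiag).  For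
   the alternating sequence the signs (-1)^i factor out of the continuant
   (continuant_sign), so up to a nonzero constant D_k is the polynomial
     K_0 = 1,  K_1 = (t - 1) b_0,  K_{k+1} = (t - 1) b_k K_k - t K_{k-1},
   with b_i = a_{i+1} > 0.  Over a real closed field this is a Sturm-like
   sequence: K_k has degree k, positive leading coefficient, sign (-1)^k at 0,
   and K_{k+1}(x) = -x K_{k-1}(x) at every zero x of K_k.  Hence (rooted_step),
   if K_k has k simple positive zeros at which K_{k-1} alternates in sign, then
   K_{k+1} changes sign on each of the k+1 intervals cut out by 0, the zeros of
   K_k and a large bound, so by the intermediate value theorem its k+1 zeros
   are simple, positive and strictly interlace those of K_k. *)

Lemma nat_ind2 (Q : nat -> Prop) :
  Q 0%N -> Q 1%N -> (forall k, Q k -> Q k.+1 -> Q k.+2) -> forall k, Q k.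
Proof.
move=> Q0 Q1 QS k; suff : Q k /\ Q k.+1 by case.
by elim: k => [|k [Qk Qk1]]; split => //; apply: QS.
Qed.

Section Continuant.
Variable R : comNzRingType.
Implicit Types (c : nat -> R) (u v w : R).

Fixpoint continuant_pair c w k : R * R :=
  if k is k'.+1 then
    let: (p, q) := continuant_pair c w k' in (q, c k * q + w * p)
  else (1, c 0%N).

Definition continuant c w k : R := (continuant_pair c w k).1.

Lemma continuant0 c w : continuant c w 0 = 1.
Proof. by []. Qed.

Lemma continuant1 c w : continuant c w 1 = c 0%N.
Proof. by []. Qed.

Lemma continuantSS c w k :
  continuant c w k.+2 = c k.+1 * continuant c w k.+1 + w * continuant c w k.
Proof.
suff pairE j : continuant_pair c w j = (continuant c w j, continuant c w j.+1).
  by rewrite {1}/continuant /= pairE.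
elim: j => [|j IH] //=; rewrite /continuant /=.
by case: (continuant_pair c w j) IH => p q [_ ->].
Qed.

Lemma eq_continuant (c1 c2 : nat -> R) w k :
  c1 =1 c2 -> continuant c1 w k = continuant c2 w k.
Proof.
move=> c12; elim/nat_ind2: k => [||k IH0 IH1] //; first by rewrite !continuant1 c12.
by rewrite !continuantSS IH0 IH1 c12.
Qed.

Lemma continuant_sign (eps : nat -> R) c w w' k :
    (forall i, eps i * eps i.+1 * w' = w) ->
  continuant (fun i => eps i * c i) w k =
  (\prod_(i < k) eps i) * continuant c w' k.
Proof.
move=> epsw; elim/nat_ind2: k => [||k IH0 IH1].
- by rewrite !continuant0 big_ord0 mulr1.
- by rewrite !continuant1 big_ord1.
rewrite !continuantSS IH0 IH1 -(epsw k) !big_ord_recr /=; ring.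
Qed.

Definition tridiag k c u v : 'M[R]_k :=
  \matrix_(i, j) (if i == j :> nat then c i else if j == i.+1 :> nat then u
                  else if i == j.+1 :> nat then v else 0).

Lemma tridiag_lead_minor k c u v :
  row' ord_max (col' ord_max (tridiag k.+1 c u v)) = tridiag k c u v.
Proof. by apply/matrixP => i j; rewrite !mxE !lift_max. Qed.

(* The other minor met when expanding along the last row: its last column
   has the single nonzero entry u. *)
Lemma det_tridiag_sub_minor k c u v :
  \det (row' ord_max (col' (widen_ord (leqnSn k.+1) ord_max) (tridiag k.+2 c u v)))
  = u * \det (tridiag k c u v).
Proof.
rewrite (expand_det_col _ ord_max) big_ord_recr /= big1 ?add0r; last first.
  move=> i _; rewrite !mxE /= !ifF ?mul0r //; apply/eqP => /= E;
  have := ltn_ord i; rewrite /bump in E; lia.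
rewrite !mxE /= /cofactor /bump /= leqnn ltnn eqxx ifF; last by lia.
rewrite addnn -signr_odd odd_double mul1r; congr (_ * \det _).
have bump_small h (x : 'I_k) : (k <= h)%N -> bump h x = x.
  by move=> kh; rewrite /bump leqNgt (leq_trans (ltn_ord x) kh).
by apply/matrixP => i j; rewrite !mxE /= !bump_small.
Qed.

Lemma det_tridiagSS k c u v : \det (tridiag k.+2 c u v) =
  c k.+1 * \det (tridiag k.+1 c u v) - u * v * \det (tridiag k c u v).
Proof.
rewrite (expand_det_row _ ord_max) !big_ord_recr /= big1 ?add0r; last first.
  move=> j _; rewrite mxE /= !ifF ?mul0r //; apply/eqP => /= E; have := ltn_ord j; lia.
rewrite addrC !mxE /= eqxx !ifF; try lia.
rewrite /cofactor det_tridiag_sub_minor tridiag_lead_minor /=.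
have sign_double m : (-1) ^+ (m + m) = 1 :> R.
  by rewrite addnn -signr_odd odd_double.
rewrite sign_double addSn exprS sign_double; ring.
Qed.

Lemma det_tridiag k c u v : \det (tridiag k c u v) = continuant c (- (u * v)) k.
Proof.
elim/nat_ind2: k => [||k IH0 IH1]; first by rewrite det_mx00.
  by rewrite det_mx11 mxE.
by rewrite det_tridiagSS continuantSS IH0 IH1 mulNr.
Qed.

End Continuant.

Lemma rmorph_continuant (R S : comNzRingType) (f : {rmorphism R -> S})
    (c : nat -> R) (w : R) k :
  f (continuant c w k) = continuant (f \o c) (f w) k.
Proof.
elim/nat_ind2: k => [||k IH0 IH1]; first by rewrite !continuant0 rmorph1.
  by rewrite !continuant1.
by rewrite !continuantSS rmorphD !rmorphM IH0 IH1.
Qed.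

Section Increasing.
Variable R : numDomainType.
Definition increasing (r : nat -> R) k := forall i, (i.+1 < k)%N -> r i < r i.+1.


Lemma increasing_lt r k : increasing r k ->
  forall i j, (i < j < k)%N -> r i < r j.
Proof.
move=> inc i j /andP[ij jk].
apply: (@Order.NatMonotonyTheory.homo_ltn_lt_in _ _ [pred i | (i < k)%N])
  => //; rewrite ?inE ?(ltn_trans ij jk) //.
- move=> x y _; rewrite inE => yk z /andP[_ zy]; rewrite inE; exact: ltn_trans zy yk.
- by move=> x _; rewrite inE; apply: inc.
Qed.

Lemma increasing_le r k : increasing r k ->
  forall i j, (i <= j < k)%N -> r i <= r j.
Proof.
move=> inc i j /andP[]; rewrite leq_eqVlt => /orP[/eqP -> //|ij jk].
by rewrite ltW // (increasing_lt inc) ?ij.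
Qed.

Lemma increasing_sorted r k : increasing r k -> sorted <%R (mkseq r k).
Proof.
move=> inc; apply/(sortedP 0) => i; rewrite size_mkseq => ik.
by rewrite !nth_mkseq ?inc // ltnW.
Qed.

End Increasing.

Section RootLocation.
Variable R : rcfType.

Definition prodX (r : nat -> R) k : {poly R} := \prod_(i < k) ('X - (r i)%:P).

Lemma prodX_root r k i : (i < k)%N -> root (prodX r k) (r i).
Proof.
move=> ik; rewrite /root /prodX horner_prod (bigD1 (Ordinal ik)) //=.
by rewrite hornerXsubC subrr mul0r.
Qed.

Lemma sign_prodX r k i x : (i <= k)%N ->
    (forall j, (j < i)%N -> r j < x) ->
    (forall j, (i <= j < k)%N -> x < r j) ->
  0 < (-1) ^+ (k - i) * (prodX r k).[x].
Proof.
move=> ik below above; rewrite /prodX horner_prod.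
elim: k ik above => [|k IH] ik above.
  by move: ik; rewrite leqn0 => /eqP ->; rewrite big_ord0 mulr1 ltr01.
rewrite big_ord_recr /= hornerXsubC.
have [ik'|] := leqP i k; last first.
  move=> ki; have -> : i = k.+1 by apply/eqP; rewrite eqn_leq ik ki.
  rewrite subnn mul1r mulr_gt0 ?subr_gt0 ?below //.
  rewrite prodr_gt0 // => j _; rewrite hornerXsubC subr_gt0 below //.
  exact: ltn_trans (ltn_ord j) _.
have xr : x < r k by apply: above; rewrite ik' /=.
have IHk : 0 < (-1) ^+ (k - i) * \prod_(j < k) ('X - (r j)%:P).[x].
  by apply: IH => // j jk; apply: above; lia.
rewrite subSn //; set p := \prod_(j < k) _ in IHk *.
have -> : (-1) ^+ (k - i).+1 * (p * (x - r k)) = (-1) ^+ (k - i) * p * (r k - x).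
  by rewrite exprS; ring.
by rewrite mulr_gt0 ?subr_gt0.
Qed.

Lemma opposite_signs_mul_lt0 (x y : R) m :
  0 < (-1) ^+ m.+1 * x -> 0 < (-1) ^+ m * y -> x * y < 0.
Proof.
move=> sx sy; have := mulr_gt0 sx sy.
have -> : (-1) ^+ m.+1 * x * ((-1) ^+ m * y) = - ((-1) ^+ (m + m) * (x * y)).
  by rewrite exprS exprD; ring.
by rewrite addnn -signr_odd odd_double mul1r oppr_gt0.
Qed.

Lemma eventually_pos (Q : {poly R}) x0 : 0 < lead_coef Q ->
  exists2 M, x0 < M & forall x, M <= x -> 0 < Q.[x].
Proof.
move=> lcQ; have [M0 QM0] := poly_pinfty_gt_lc lcQ.
exists (Num.max M0 (x0 + 1)); first by rewrite lt_max ltrDl ltr01 orbT.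
by move=> x; rewrite ge_max => /andP[M0x _]; apply: lt_le_trans lcQ (QM0 x M0x).
Qed.

Lemma prodX_mkseq r k : prodX r k = \prod_(z <- mkseq r k) ('X - z%:P).
Proof. by rewrite /prodX /mkseq big_map -(subn0 k) big_mkord subn0. Qed.

(* Intermediate value theorem, m times: a polynomial of degree m changing
   sign on m consecutive intervals has exactly one zero in each of them. *)
Lemma interval_roots (Q : {poly R}) (e : nat -> R) m : size Q = m.+1 ->
    (forall i, (i < m)%N -> e i < e i.+1 /\ Q.[e i] * Q.[e i.+1] < 0) ->
  exists t, (forall i, (i < m)%N -> e i < t i < e i.+1) /\
            Q = lead_coef Q *: prodX t m.
Proof.
move=> sizeQ sep.
have pick i : exists x, (m <= i)%N || (e i < x < e i.+1) && root Q x.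
  have [mi|im] := leqP m i; first by exists 0; apply/orP; left.
  have [lt_e Qneg] := sep i im.
  have [x] := poly_ivtoo (ltW lt_e) Qneg; rewrite in_itv /= => xin Qx.
  by exists x; rewrite xin Qx.
pose t i := xchoose (pick i).
have t_in i : (i < m)%N -> e i < t i < e i.+1 /\ root Q (t i).
  move=> im; have /orP[|/andP[]//] := xchooseP (pick i).
  by rewrite leqNgt im.
have t_incr : increasing t m.
  move=> i im; have [/andP[_ t_lt] _] := t_in i (ltnW im).
  by have [/andP[lt_t _] _] := t_in i.+1 im; apply: lt_trans lt_t.
exists t; split=> [i im|]; first by have [] := t_in i im.
rewrite prodX_mkseq; apply: all_roots_prod_XsubC; first by rewrite size_mkseq.
  by rewrite /mkseq all_map; apply/allP => i; rewrite mem_iota => /andP[_ /t_in[]].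
by rewrite uniq_rootsE (sorted_uniq lt_trans ltxx) ?increasing_sorted.
Qed.

End RootLocation.

Section Kpoly.
Variable R : rcfType.
Variable b : nat -> R.
Variable N : nat.
Hypothesis b_pos : forall i, (i < N)%N -> 0 < b i.

Definition Kpoly k : {poly R} := continuant (fun i => ('X - 1) * (b i)%:P) (- 'X) k.

Lemma Kpoly0 : Kpoly 0 = 1. Proof. exact: continuant0. Qed.
Lemma Kpoly1 : Kpoly 1 = ('X - 1) * (b 0%N)%:P. Proof. exact: continuant1. Qed.
Lemma KpolySS k :
  Kpoly k.+2 = ('X - 1) * (b k.+1)%:P * Kpoly k.+1 - 'X * Kpoly k.
Proof. by rewrite /Kpoly continuantSS mulNr. Qed.

Lemma Kpoly_horner0 k : (Kpoly k.+1).[0] = - b k * (Kpoly k).[0].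
Proof.
by case: k => [|k]; rewrite ?Kpoly1 ?Kpoly0 ?KpolySS !hornerE; ring.
Qed.

Lemma Kpoly_sign0 k : (k <= N)%N -> 0 < (-1) ^+ k * (Kpoly k).[0].
Proof.
elim: k => [|k IH] kN; first by rewrite Kpoly0 hornerC mulr1 ltr01.
have -> : (-1) ^+ k.+1 * (Kpoly k.+1).[0] = b k * ((-1) ^+ k * (Kpoly k).[0]).
  by rewrite Kpoly_horner0 exprS; ring.
by rewrite mulr_gt0 ?b_pos ?IH // ltnW.
Qed.

Lemma Kpoly_size_lead k :
  (k <= N)%N -> size (Kpoly k) = k.+1 /\ 0 < lead_coef (Kpoly k).
Proof.
have linear_factor i : (i < N)%N ->
    size (('X - 1) * (b i)%:P) = 2 /\ lead_coef (('X - 1) * (b i)%:P) = b i.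
  move=> iN; have bi0 : b i != 0 by rewrite gt_eqF ?b_pos.
  by rewrite mulrC mul_polyC -polyC1 size_scale ?lead_coefZ ?size_XsubC
             ?lead_coefXsubC ?mulr1.
elim/nat_ind2: k => [||k IH0 IH1] kN.
- by rewrite Kpoly0 size_poly1 lead_coef1 ltr01.
- by rewrite Kpoly1; have [-> ->] := linear_factor 0%N kN; rewrite b_pos.
have [size1 lead1] := IH1 (ltnW kN); have [size0 _] := IH0 (ltnW (ltnW kN)).
have [sizeL leadL] := linear_factor k.+1 kN.
have Kk1 : Kpoly k.+1 != 0 by rewrite -size_poly_eq0 size1.
have sizeM : size (('X - 1) * (b k.+1)%:P * Kpoly k.+1) = k.+3.
  by rewrite size_mul ?size1 ?sizeL // -size_poly_eq0 sizeL.
have sizeX : size (- ('X * Kpoly k)) = k.+2.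
  by rewrite size_polyN mulrC size_mulX -?size_poly_eq0 size0.
rewrite KpolySS; split; first by rewrite size_addl sizeM ?sizeX.
by rewrite lead_coefDl ?sizeM ?sizeX // lead_coefM leadL mulr_gt0 ?b_pos.
Qed.

Lemma Kpoly_at_root k x : (0 < k)%N -> root (Kpoly k) x ->
  (Kpoly k.+1).[x] = - x * (Kpoly k.-1).[x].
Proof. by case: k => // k _ /rootP Kx; rewrite KpolySS !hornerE Kx; ring. Qed.

(* Induction invariant: r lists the zeros of K_k, simple and positive, and
   K_(k-1) alternates in sign on them. *)
Definition rooted k (r : nat -> R) : Prop :=
  [/\ increasing r k, (0 < k)%N -> 0 < r 0%N,
      Kpoly k = lead_coef (Kpoly k) *: prodX r k &
      forall i, (i < k)%N -> 0 < (-1) ^+ (k.-1 - i) * (Kpoly k.-1).[r i]].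

Lemma rooted0 : rooted 0 (fun _ => 0).
Proof. by split => //; rewrite Kpoly0 lead_coef1 scale1r /prodX big_ord0. Qed.

Lemma rooted_sign_between k r i x : (k <= N)%N -> rooted k r -> (i <= k)%N ->
    (forall j, (j < i)%N -> r j < x) -> (forall j, (i <= j < k)%N -> x < r j) ->
  0 < (-1) ^+ (k - i) * (Kpoly k).[x].
Proof.
move=> kN [_ _ Kr _] ik below above; have [_ lcK] := Kpoly_size_lead kN.
by rewrite Kr hornerZ mulrCA mulr_gt0 // sign_prodX.
Qed.

Lemma rooted_sign_next k r i : rooted k r -> (i < k)%N ->
  0 < (-1) ^+ (k - i) * (Kpoly k.+1).[r i].
Proof.
move=> [r_inc r0 Kr Ksign] ik.
have root_ri : root (Kpoly k) (r i).
  by rewrite /root Kr hornerZ (rootP (prodX_root r ik)) mulr0.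
have ri_pos : 0 < r i.
  by apply: lt_le_trans (r0 _) (increasing_le r_inc _); rewrite ?ik //; lia.
rewrite Kpoly_at_root //; last by lia.
have -> : (k - i)%N = (k.-1 - i).+1 by lia.
have -> : (-1) ^+ (k.-1 - i).+1 * (- r i * (Kpoly k.-1).[r i]) =
          r i * ((-1) ^+ (k.-1 - i) * (Kpoly k.-1).[r i]) by rewrite exprS; ring.
by rewrite mulr_gt0 ?Ksign.
Qed.

(* The inductive step: the zeros of K_(k+1) are located in the intervals
   between the nodes 0, r_0, ..., r_(k-1), M, and interlace those of K_k. *)
Lemma rooted_step k r : (k < N)%N -> rooted k r ->
  exists t, rooted k.+1 t /\ (forall i, (i < k)%N -> t i < r i < t i.+1).
Proof.
move=> kN rk; have [r_inc r0 _ _] := rk.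
have [sizeK lcK] := Kpoly_size_lead kN.
have [M rM KM] := eventually_pos (Num.max 0 (r k.-1)) lcK.
have /andP[M_pos rM'] : (0 < M) && (r k.-1 < M) by rewrite -gt_max.
(* Nodes 0 < r_0 < ... < r_(k-1) < M, on which K_(k+1) alternates in sign. *)
pose e i := if i == 0%N then 0 else if (i <= k)%N then r i.-1 else M.
have e_mid i : (0 < i <= k)%N -> e i = r i.-1.
  by case/andP => i0 ik; rewrite /e (negPf (lt0n_neq0 i0)) ik.
have e_sign i : (i <= k.+1)%N -> 0 < (-1) ^+ (k.+1 - i) * (Kpoly k.+1).[e i].
  move=> ik; case: (posnP i) => [->|i0]; first by rewrite subn0 Kpoly_sign0.
  have [ik'|] := leqP i k; last first.
    move=> ki; have -> : i = k.+1 by lia.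
    by rewrite subnn mul1r KM // /e ltnn.
  rewrite e_mid ?i0 // (_ : (k.+1 - i = k - i.-1)%N) ?rooted_sign_next //; lia.
have e_incr i : (i < k.+1)%N -> e i < e i.+1.
  move=> ik; have [ki|ik'] := leqP k i.
    have -> : i = k by lia.
    rewrite {2}/e ltnn /=; case: (posnP k) => [k0|k0]; first by rewrite k0.
    by rewrite e_mid // k0 leqnn.
  rewrite (e_mid i.+1) ?ik' //; case: (posnP i) => [->|i0]; first by rewrite r0 //; lia.
  by rewrite e_mid ?i0 // (increasing_lt r_inc); lia.
have e_sep i : (i < k.+1)%N ->
    e i < e i.+1 /\ (Kpoly k.+1).[e i] * (Kpoly k.+1).[e i.+1] < 0.
  move=> ik; split; first exact: e_incr.
  apply: (@opposite_signs_mul_lt0 _ _ _ (k - i)).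
    by rewrite -subSn ?e_sign // ltnW.
  by rewrite -subSS e_sign.
have [t [t_in Kt]] := interval_roots sizeK e_sep.
have t_lo i : (i < k.+1)%N -> e i < t i by move=> ik; have /andP[] := t_in i ik.
have t_hi i : (i < k.+1)%N -> t i < e i.+1 by move=> ik; have /andP[] := t_in i ik.
exists t; split; last first.
  move=> i ik; rewrite -(e_mid i.+1) ?ik // t_hi ?t_lo //=; lia.
split=> [i ik||//|i ik /=].
- by apply: lt_trans (t_hi i _) (t_lo i.+1 _); lia.
- by move=> _; exact: (t_lo 0%N).
apply: (rooted_sign_between (ltnW kN) rk) => [|j ji|j /andP[ij jk]]; first lia.
  apply: le_lt_trans (t_lo i ik); rewrite e_mid; last lia.
  by apply: (increasing_le r_inc); lia.
apply: lt_le_trans (t_hi i ik) _; rewrite e_mid; last lia.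
by apply: (increasing_le r_inc); lia.
Qed.

Lemma rooted_exists k : (k <= N)%N -> exists r, rooted k r.
Proof.
elim: k => [|k IH] kN; first by exists (fun _ => 0); apply: rooted0.
have [r rk] := IH (ltnW kN); have [t [tk _]] := rooted_step kN rk.
by exists t.
Qed.

End Kpoly.


Lemma alexander_tridiag r : alexander r =
  \det (tridiag (size r) (fun i => ('X - 1) * ((r`_i %/ 2)%Z)%:P) 'X (-1)).
Proof.
rewrite /alexander; congr (\det _); apply/matrixP => i j; rewrite !mxE.
have [<-|ij] := eqVneq i j; first by rewrite !eqxx mulrBl mul1r.
have ij' : (i == j :> nat) = false by apply/negbTE.
rewrite ij'; have [ji|_] := eqVneq (j : nat) i.+1.
  by rewrite ji ifF ?polyC0 ?subr0 ?mulr1 //; apply/eqP; lia.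
by rewrite mulr0 sub0r; case: eqP; rewrite ?oppr0.
Qed.

Lemma alexander_alt a k : alexander (alt_seq a k) =
  continuant (fun i => ('X - 1) * ((-1) ^+ i * a`_i)%:P) 'X k.
Proof.
rewrite alexander_tridiag size_mkseq.
transitivity (\det (tridiag k (fun i => ('X - 1) * ((-1) ^+ i * a`_i)%:P) 'X (-1))).
  congr (\det _); apply/matrixP => i j; rewrite !mxE; case: eqP => // _.
  by rewrite nth_mkseq // -mulrA [2 * _]mulrC mulrA mulzK.
by rewrite det_tridiag mulrN1 opprK.
Qed.

Lemma alexC_alt a k : alexC (alt_seq a k) =
  map_poly algRval ((\prod_(i < k) (-1) ^+ i) *: Kpoly (fun i => (a`_i)%:~R) k).
Proof.
have int_algR : (fun z : int => z%:~R : algC) =1 algRval \o intr.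
  by move=> z /=; rewrite rmorph_int.
rewrite /alexC (eq_map_poly int_algR) map_poly_comp; congr map_poly.
rewrite alexander_alt rmorph_continuant /= map_polyX -mul_polyC rmorph_prod.
rewrite /Kpoly -(@continuant_sign _ (fun i => ((-1) ^+ i)%:P) _ 'X) => [|i]; last first.
  rewrite -!polyCM -exprD addnS addnn exprS -signr_odd odd_double mulr1.
  by rewrite polyCN polyC1 mulN1r opprK.
apply: (eq_continuant (R := {poly algR})) => i /=.
rewrite rmorphM rmorphB /= map_polyX map_polyC rmorph1 map_polyC /=.
by rewrite rmorphM rmorphXn rmorphN1 polyCM; ring.
Qed.

Lemma alexC_factor a k (t : nat -> algR) :
    (forall i, (i < k)%N -> 0 < a`_i) ->
    rooted (fun i => (a`_i)%:~R) k t ->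
  exists2 C : algC, C != 0 &
    alexC (alt_seq a k) = C *: \prod_(z <- mkseq (fun i => algRval (t i)) k) ('X - z%:P).
Proof.
move=> a_pos [_ _ Kt _].
have b_pos i : (i < k)%N -> 0 < (a`_i)%:~R :> algR by move=> ik; rewrite ltr0z a_pos.
have [_ lcK] := Kpoly_size_lead b_pos (leqnn k).
eexists; last first.
  by rewrite alexC_alt {1}Kt scalerA map_polyZ prodX_mkseq map_prod_XsubC /mkseq !big_map.
rewrite fmorph_eq0 mulf_neq0 ?(lt0r_neq0 lcK) //.
by apply/prodf_neq0 => i _; rewrite signr_eq0.
Qed.

Lemma interlacing_chain (T S : nat -> algC) m :
    (forall i, (i < m)%N -> T i < S i < T i.+1) ->
  [/\ sorted <=%R (mkseq T m.+1), sorted <=%R (mkseq S m),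
      uniq (mkseq T m.+1 ++ mkseq S m) &
      interlaced_seq (mkseq T m.+1) (mkseq S m)].
Proof.
move=> chain.
have T_inc : increasing T m.+1.
  by move=> i im; have /andP[TS ST] := chain i im; apply: lt_trans TS ST.
have S_inc : increasing S m.
  move=> i im; have /andP[_ ST] := chain i (ltnW im).
  by have /andP[TS _] := chain i.+1 im; apply: lt_trans ST TS.
have weaken r k : increasing r k -> sorted <=%R (mkseq r k).
  by move=> inc; apply: sub_sorted (increasing_sorted inc) => x y /ltW.
split; rewrite ?weaken //.
  rewrite cat_uniq !(sorted_uniq lt_trans ltxx) ?increasing_sorted //= andbT.
  apply/hasPn => y /mapP[j]; rewrite mem_iota => /andP[_ jm] ->.
  apply/negP => /mapP[i]; rewrite mem_iota => /andP[_ im] Sij.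
  have /andP[TS ST] := chain j jm.
  have [ij|ji] := leqP i j.
    have TiTj : T i <= T j by apply: (increasing_le T_inc); lia.
    by move: (le_lt_trans TiTj TS); rewrite Sij ltxx.
  have TjTi : T j.+1 <= T i by apply: (increasing_le T_inc); lia.
  by move: (lt_le_trans ST TjTi); rewrite Sij ltxx.
rewrite /interlaced_seq !size_mkseq; right; left; split => // i im.
have /andP[TS ST] := chain i im.
by rewrite !nth_mkseq ?ltW //; lia.
Qed.

Lemma zero_properties (p q : {poly algC}) (C C' : algC) (xs ys : seq algC) :
    C != 0 -> C' != 0 ->
    p = C *: \prod_(z <- xs) ('X - z%:P) -> q = C' *: \prod_(z <- ys) ('X - z%:P) ->
    all (fun x => x \is Num.real) xs -> all (fun y => y \is Num.real) ys ->
    sorted <=%R xs -> sorted <=%R ys -> uniq (xs ++ ys) -> interlaced_seq xs ys ->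
  [/\ only_real_zeros p, only_real_zeros q, no_repeated_zeros (p * q) &
      interlaced p q].
Proof.
move=> C0 C'0 pE qE xs_real ys_real xs_sorted ys_sorted xys_uniq xys_inter.
have lead_factor (c : algC) (zs : seq algC) : lead_coef (c *: \prod_(z <- zs) ('X - z%:P)) = c.
  by rewrite lead_coefZ (monicP (monic_prod_XsubC _ _ _)) mulr1.
split.
- by move=> z; rewrite pE rootZ // root_prod_XsubC => /(allP xs_real).
- by move=> z; rewrite qE rootZ // root_prod_XsubC => /(allP ys_real).
- move=> z; rewrite pE qE -scalerAl -scalerAr scalerA -big_cat /=.
  rewrite rootZ ?mulf_neq0 // root_prod_XsubC => z_in.
  by rewrite -mul_polyC mupMr ?rootC ?mulf_neq0 // mu_prod_XsubC count_uniq_mem ?z_in.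
by exists xs, ys; rewrite /sorted_zeros pE qE !lead_factor.
Qed.

Theorem theorem9p4 (n : nat) (a : seq int) :
  (2 <= n)%N -> size a = n -> (forall i, (i < n)%N -> 0 < a`_i) ->
  let s := alt_seq a n in
  let s' := alt_seq a n.-1 in
  [/\ only_real_zeros (alexC s),
      only_real_zeros (alexC s'),
      no_repeated_zeros (alexC s * alexC s')
    & interlaced (alexC s) (alexC s')].
Proof.
case: n => [//|m] _ _ a_pos s s'.
pose b i : algR := (a`_i)%:~R.
have b_pos i : (i < m.+1)%N -> 0 < b i by move=> im; rewrite ltr0z a_pos.
have [r r_rooted] := rooted_exists b_pos (leqnSn m).
have [t [t_rooted chain]] := rooted_step b_pos (ltnSn m) r_rooted.
have [C C0 sE] := alexC_factor a_pos t_rooted.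
have [C' C'0 s'E] := alexC_factor (fun i im => a_pos i (ltnW im)) r_rooted.
have [] := interlacing_chain (T := fun i => algRval (t i)) (S := fun i => algRval (r i)) chain.
have real_seq (u : nat -> algR) k : all (fun x => x \is Num.real) (mkseq (fun i => algRval (u i)) k).
  by rewrite /mkseq all_map; apply/allP => i _; apply: algRvalP.
by move=> *; apply: (zero_properties C0 C'0 sE s'E); rewrite ?real_seq.
Qed.
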